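(* Let $S\le T_n$ be a transformation monoid and $G$ the normalizer of $S$ in $S_n$. If $a\in S$ is $\mathcal R$-related in $SG$ to an idempotent $e$ of $SG$, then $e\in S$ and $a$ is $\mathcal R$-related in $S$ to $e$.
   Context: A transformation monoid is a subsemigroup of $T_n$ containing the identity map; $G=\{g\in S_n:g^{-1}Sg=S\}$ and $SG=\{sg:s\in S,g\in G\}$, a semigroup. For a semigroup $U$, elements $a,b\in U$ are $\mathcal R$-related in $U$ if there exist $u,v\in U^1$ with $a=bu$ and $b=av$, where $U^1$ is $U$ with an identity adjoined. *)

From mathcomp Require Import all_boot all_fingroup.
Set Implicit Arguments. Unset Strict Implicit. Unset Printing Implicit Defensive.

Definition trans (n : nat) := {ffun 'I_n -> 'I_n}.

(* Product with maps acting on the right (semigroup convention):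
   x (s t) = (x s) t, i.e. first s, then t. *)
Definition tmul (n : nat) (s t : trans n) : trans n := [ffun x => t (s x)].

Definition tid (n : nat) : trans n := [ffun x => x].

Definition pmap (n : nat) (g : {perm 'I_n}) : trans n := [ffun x => g x].

Definition is_tmonoid (n : nat) (S : {set trans n}) : Prop :=
  tid n \in S /\ (forall s t, s \in S -> t \in S -> tmul s t \in S).

Definition normalizer (n : nat) (S : {set trans n}) : {set {perm 'I_n}} :=
  [set g : {perm 'I_n} |
     [set tmul (tmul (pmap g^-1) s) (pmap g) | s in S] == S].

Definition SG (n : nat) (S : {set trans n}) : {set trans n} :=
  [set tmul s (pmap g) | s in S, g in normalizer S].

Definition Rrel (n : nat) (U : {set trans n}) (a b : trans n) : Prop :=
  (exists u, (u \in U \/ u = tid n) /\ a = tmul b u) /\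
  (exists v, (v \in U \/ v = tid n) /\ b = tmul a v).

From Pilot Require Import Defs.
From mathcomp Require Import all_boot all_fingroup.

Set Implicit Arguments.
Unset Strict Implicit.
Unset Printing Implicit Defensive.

(** If [e = a s g] is idempotent with [a s] in [S] and [g] normalizing [S],
    then [e = e^k] for every [k], and pushing the permutations in [e^k] to the
    right rewrites it as [a s t g^k] with [t] a product of conjugates of [a s]
    by powers of [g], all lying in [S]. Taking [k] the order of [g] gives
    [e = a s t] with [s t] in [S]; together with [a = e a], which follows
    from [a = e u] and [e e = e], this makes [a] and [e] R-related in [S]. *)

Local Open Scope group_scope.
Local Notation pmap := Defs.pmap.

Section TransformationAlgebra.
Variable n : nat.
Implicit Types (s t u : trans n) (g h : {perm 'I_n}).

Lemma tmulA s t u : tmul (tmul s t) u = tmul s (tmul t u).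
Proof. by apply/ffunP => x; rewrite !ffunE. Qed.

Lemma tmul1r s : tmul s (tid n) = s.
Proof. by apply/ffunP => x; rewrite !ffunE. Qed.

Lemma tmul1l s : tmul (tid n) s = s.
Proof. by apply/ffunP => x; rewrite !ffunE. Qed.

Lemma pmapM g h : pmap (g * h) = tmul (pmap g) (pmap h).
Proof. by apply/ffunP => x; rewrite !ffunE permM. Qed.

Lemma pmap1 : pmap (1 : {perm 'I_n}) = tid n.
Proof. by apply/ffunP => x; rewrite !ffunE perm1. Qed.

Lemma pmapV g : tmul (pmap g^-1) (pmap g) = tid n.
Proof. by rewrite -pmapM mulVg pmap1. Qed.

Lemma pmapVr g : tmul (pmap g) (pmap g^-1) = tid n.
Proof. by rewrite -pmapM mulgV pmap1. Qed.

Lemma pmap_order g : pmap (g ^+ #[g]) = tid n.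
Proof. by rewrite expg_order pmap1. Qed.

Definition tconj h s : trans n := tmul (tmul (pmap h) s) (pmap h^-1).

Lemma tconjM g h s : tconj (g * h) s = tconj g (tconj h s).
Proof. by rewrite /tconj invMg !pmapM !tmulA. Qed.

Lemma tconjVK h s : tconj h (tconj h^-1 s) = s.
Proof. by rewrite /tconj invgK !tmulA pmapVr tmul1r -tmulA pmapVr tmul1l. Qed.

Lemma tmul_pmap_tconj h s : tmul (pmap h) s = tmul (tconj h s) (pmap h).
Proof. by rewrite /tconj !tmulA pmapV tmul1r. Qed.

End TransformationAlgebra.

Section NormalizedMonoid.
Variables (n : nat) (S : {set trans n}).
Hypothesis S_monoid : is_tmonoid S.
Implicit Types (s t : trans n) (g : {perm 'I_n}).

Lemma tid_in : tid n \in S.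
Proof. by case: S_monoid. Qed.

Lemma tmul_in s t : s \in S -> t \in S -> tmul s t \in S.
Proof. by case: S_monoid => _; apply. Qed.

Definition tconj_stable g := {in S, forall s, tconj g s \in S}.

Lemma normalizer_tconj_stable g : g \in normalizer S -> tconj_stable g.
Proof.
rewrite inE => /eqP defS s; rewrite -{1}defS => /imsetP[s' s'S ->].
suff -> : tmul (tmul (pmap g^-1) s') (pmap g) = tconj g^-1 s' by rewrite tconjVK.
by rewrite /tconj invgK.
Qed.

Lemma tconj_stableX g k : tconj_stable g -> tconj_stable (g ^+ k).
Proof.
move=> stable_g; elim: k => [|k IHk] s sS.
  by rewrite /tconj expg0 invg1 pmap1 tmul1l tmul1r.
by rewrite expgSr tconjM IHk ?stable_g.
Qed.

Lemma idempotent_mul_perm x g :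
  x \in S -> tconj_stable g ->
  let e := tmul x (pmap g) in tmul e e = e ->
  exists2 t, t \in S & e = tmul x t.
Proof.
move=> xS stable_g e idem_e.
have expand k : exists2 t, t \in S & e = tmul (tmul x t) (pmap (g ^+ k.+1)).
  elim: k => [|k [t tS def_e]]; first by exists (tid n); rewrite ?tid_in ?tmul1r.
  exists (tmul t (tconj (g ^+ k.+1) x)).
    by rewrite tmul_in // (tconj_stableX k.+1 stable_g).
  rewrite -idem_e {1}def_e /e [g ^+ k.+2]expgSr pmapM !tmulA.
  by rewrite -(tmulA (pmap _)) tmul_pmap_tconj !tmulA.
have [t tS def_e] := expand #[g].-1.
by exists t; rewrite // def_e prednK ?order_gt0 // pmap_order tmul1r.
Qed.

End NormalizedMonoid.

Theorem lemma4p2 (n : nat) (S : {set trans n}) (a e : trans n) :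
  is_tmonoid S ->
  a \in S ->
  e \in SG S ->
  tmul e e = e ->
  Rrel (SG S) a e ->
  e \in S /\ Rrel S a e.
Proof.
move=> S_monoid aS _ idem_e [[u [_ def_a]] [v [v_in def_e]]].
have ea : a = tmul e a by rewrite {2}def_a -tmulA idem_e -def_a.
suff [w wS def_e'] : exists2 w, w \in S & e = tmul a w.
  split; first by rewrite def_e' tmul_in.
  by split; [exists a | exists w]; split; try left.
case: v_in def_e => [/imset2P[s g sS gN ->] | ->]; last by exists (tid n); rewrite ?tid_in.
rewrite -tmulA => def_e.
have [t tS def_as] : exists2 t, t \in S & tmul (tmul a s) (pmap g) = tmul (tmul a s) t.
  apply: idempotent_mul_perm => //; last by rewrite -def_e.
  - exact: tmul_in.
  - exact: normalizer_tconj_stable.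
by exists (tmul s t); rewrite ?tmul_in // def_e def_as tmulA.
Qed.
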